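(* Let $d_1,\dots,d_n$ be positive integers with $d=\sum_id_i\ge2$, and let $c_0,c_1\in\mathbb{R}^n$ (in the paper $c_0=(\ln a_1,\dots,\ln a_n)$, $c_1=(\ln b_1,\dots,\ln b_n)$ for positive $a_i,b_i$). There exists a bounded convex open set $\Omega\subset\mathbb{R}\times C^1([0,1];\mathbb{R}^n)$ containing every pair $(\lambda,y)$ that, for some $p_3\in[0,1]$, satisfies $$\sum_{i=1}^nd_i\Big(-y_i'\sum_{k=1}^nd_ky_k'+y_i'^2\Big)\Big|_{r=0}=(d-1)\lambda,$$ $$-y_i'\sum_{k=1}^nd_ky_k'-y_i''=\lambda\ \text{ on }[0,1]\ (i=1,\dots,n),\qquad y(0)=p_3c_0,\quad y(1)=p_3c_1.$$
   Context: $\mathbb{R}\times C^1([0,1];\mathbb{R}^n)$ is the Banach space with the product norm (absolute value on $\mathbb{R}$, $C^1$ norm on the second factor); solutions $y$ are $C^2$. *)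

From Stdlib Require Import Reals.
Open Scope R_scope.

Fixpoint rsum (n : nat) (f : nat -> R) : R :=
  match n with O => 0 | S m => rsum m f + f m end.

Definition in01 (x : R) : Prop := 0 <= x <= 1.

Definition cont01 (f : R -> R) : Prop :=
  forall x, in01 x -> forall eps, eps > 0 -> exists delta, delta > 0 /\
    forall z, in01 z -> Rabs (z - x) < delta -> Rabs (f z - f x) < eps.

Definition deriv01 (f f' : R -> R) : Prop :=
  forall x, in01 x -> forall eps, eps > 0 -> exists delta, delta > 0 /\
    forall h, h <> 0 -> Rabs h < delta -> in01 (x + h) ->
      Rabs ((f (x + h) - f x) / h - f' x) < eps.

(* An element of R x C^1([0,1];R^n) is represented by (lam, y, y') where
   y i (i < n) are the components, y' i their derivatives on [0,1]
   (uniquely determined on [0,1]); only values on [0,1] and indices i < n matter. *)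
Definition inC1 (n : nat) (y y' : nat -> R -> R) : Prop :=
  forall i, (i < n)%nat -> deriv01 (y i) (y' i) /\ cont01 (y' i).

Definition subset_space (n : nat) (Om : R -> (nat -> R -> R) -> (nat -> R -> R) -> Prop) :=
  forall lam y y', Om lam y y' -> inC1 n y y'.

(* Open w.r.t. |lam| + max_i (sup|y_i| + sup|y_i'|) (an equivalent product norm);
   pointwise strict bounds on the compact [0,1] = sup-norm ball by continuity. *)
Definition open_space (n : nat) (Om : R -> (nat -> R -> R) -> (nat -> R -> R) -> Prop) :=
  forall lam y y', Om lam y y' -> exists eps, eps > 0 /\
    forall mu z z', inC1 n z z' -> Rabs (mu - lam) < eps ->
      (forall i x, (i < n)%nat -> in01 x ->
         Rabs (z i x - y i x) < eps /\ Rabs (z' i x - y' i x) < eps) ->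
      Om mu z z'.

Definition bounded_space (n : nat) (Om : R -> (nat -> R -> R) -> (nat -> R -> R) -> Prop) :=
  exists M, forall lam y y', Om lam y y' -> Rabs lam <= M /\
    forall i x, (i < n)%nat -> in01 x -> Rabs (y i x) <= M /\ Rabs (y' i x) <= M.

Definition convex_space (Om : R -> (nat -> R -> R) -> (nat -> R -> R) -> Prop) :=
  forall l1 y1 y1' l2 y2 y2' t, Om l1 y1 y1' -> Om l2 y2 y2' -> 0 <= t <= 1 ->
    Om (t * l1 + (1 - t) * l2)
       (fun i x => t * y1 i x + (1 - t) * y2 i x)
       (fun i x => t * y1' i x + (1 - t) * y2' i x).

(* With Y = sum_k d_k y_k and S = Y', the equations give the Riccati equation
   S' = -S^2 - mu (mu = d lam) and make both E = (S^2 + mu) e^(2Y) and each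
   (y_i' - S/d) e^Y constant; the boundary condition at r = 0 identifies
   A = sum_i d_i (y_i' - S/d)^2 e^(2Y) with (d-1)/d E, so S^2 + mu >= 0. The mean value
   theorem then bounds mu from below by the boundary data, and Sturm comparison with
   sin (PI r) gives mu < PI^2. The function sigma = sum_i d_i a_i (y_i - Y/d) has
   sigma' = A e^(-Y) and an increment controlled by the boundary data (Cauchy-Schwarz),
   which bounds E, hence S, y' and y. These bounds are uniform in p3, so Omega can be
   taken to be a slightly larger open ball of R x C^1. *)

From Coquelicot Require Import Coquelicot.
From Stdlib Require Import Reals Lra Lia.
Open Scope R_scope.

Lemma rsum_ext n f g : (forall k, (k < n)%nat -> f k = g k) -> rsum n f = rsum n g.
Proof.
  induction n as [|n IH]; intros Hfg; cbn [rsum]; [reflexivity|].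
  rewrite IH, Hfg; auto with arith.
Qed.

Lemma rsum_lincomb n (f g : nat -> R) a b :
  rsum n (fun k => a * f k + b * g k) = a * rsum n f + b * rsum n g.
Proof. induction n as [|n IH]; cbn [rsum]; [ring|rewrite IH; ring]. Qed.

Lemma rsum_scal n (f : nat -> R) a : rsum n (fun k => a * f k) = a * rsum n f.
Proof. induction n as [|n IH]; cbn [rsum]; [ring|rewrite IH; ring]. Qed.

Lemma rsum_minus n (f g : nat -> R) : rsum n f - rsum n g = rsum n (fun k => f k - g k).
Proof. induction n as [|n IH]; cbn [rsum]; [ring|rewrite <- IH; ring]. Qed.

Lemma rsum_weighted_sq_dev n (c f : nat -> R) s :
  rsum n (fun k => c k * (f k - s) ^ 2)
  = rsum n (fun k => c k * f k ^ 2) - 2 * s * rsum n (fun k => c k * f k) + s ^ 2 * rsum n c.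
Proof. induction n as [|n IH]; cbn [rsum]; [ring|rewrite IH; ring]. Qed.

Lemma rsum_le n f g : (forall k, (k < n)%nat -> f k <= g k) -> rsum n f <= rsum n g.
Proof.
  induction n as [|n IH]; intros Hfg; cbn [rsum]; [lra|].
  apply Rplus_le_compat; auto with arith.
Qed.

Lemma rsum_nonneg n f : (forall k, (k < n)%nat -> 0 <= f k) -> 0 <= rsum n f.
Proof.
  induction n as [|n IH]; intros Hf; cbn [rsum]; [lra|].
  assert (0 <= f n) by auto with arith.
  assert (0 <= rsum n f) by (apply IH; auto with arith).
  lra.
Qed.

Lemma rsum_term_le n f i : (forall k, (k < n)%nat -> 0 <= f k) -> (i < n)%nat -> f i <= rsum n f.
Proof.
  induction n as [|n IH]; intros Hf Hi; cbn [rsum]; [lia|].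
  assert (0 <= rsum n f) by (apply rsum_nonneg; auto with arith).
  assert (0 <= f n) by auto with arith.
  destruct (Nat.eq_dec i n) as [->|Hne]; [lra|].
  assert (f i <= rsum n f) by (apply IH; auto with arith; lia).
  lra.
Qed.

Lemma Rabs_rsum_le n f : Rabs (rsum n f) <= rsum n (fun k => Rabs (f k)).
Proof.
  induction n as [|n IH]; cbn [rsum]; [rewrite Rabs_R0; lra|].
  eapply Rle_trans; [apply Rabs_triang | lra].
Qed.

Lemma cross_term_le a p q x y : 0 <= p -> 0 <= q -> a ^ 2 <= p * q ->
  2 * a * x * y <= p * y ^ 2 + q * x ^ 2.
Proof.
  intros Hp Hq Ha.
  set (s := 2 * a * x * y). set (t := p * y ^ 2 + q * x ^ 2).
  assert (Hst : t ^ 2 - s ^ 2 = (p * y ^ 2 - q * x ^ 2) ^ 2 + 4 * (x * y) ^ 2 * (p * q - a ^ 2))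
    by (unfold s, t; ring).
  assert (0 <= t) by (unfold t; pose proof (pow2_ge_0 x); pose proof (pow2_ge_0 y); nra).
  assert (0 <= (x * y) ^ 2 * (p * q - a ^ 2)) by (apply Rmult_le_pos; [apply pow2_ge_0 | lra]).
  pose proof (pow2_ge_0 (p * y ^ 2 - q * x ^ 2)).
  destruct (Rle_lt_dec s t) as [|Hts]; [assumption|].
  assert (t ^ 2 < s ^ 2) by (cbn [rsum]; nra).
  lra.
Qed.

Lemma rsum_Cauchy_Schwarz n (c f g : nat -> R) : (forall k, (k < n)%nat -> 0 <= c k) ->
  rsum n (fun k => c k * f k * g k) ^ 2
  <= rsum n (fun k => c k * f k ^ 2) * rsum n (fun k => c k * g k ^ 2).
Proof.
  induction n as [|n IH]; intros Hc; cbn [rsum]; [lra|].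
  assert (IHn := IH (fun k Hk => Hc k (Nat.lt_lt_succ_r _ _ Hk))).
  set (a := rsum n (fun k => c k * f k * g k)) in *.
  set (p := rsum n (fun k => c k * f k ^ 2)) in *.
  set (q := rsum n (fun k => c k * g k ^ 2)) in *.
  assert (Hcn : 0 <= c n) by auto with arith.
  assert (Hp : 0 <= p)
    by (apply rsum_nonneg; intros k Hk; assert (0 <= c k) by auto with arith; nra).
  assert (Hq : 0 <= q)
    by (apply rsum_nonneg; intros k Hk; assert (0 <= c k) by auto with arith; nra).
  assert (Hcross := cross_term_le a p q (f n) (g n) Hp Hq IHn).
  assert (c n * (2 * a * f n * g n) <= c n * (p * g n ^ 2 + q * f n ^ 2))
    by (apply Rmult_le_compat_l; assumption).
  nra.
Qed.

Lemma exp_le_compat x y : x <= y -> exp x <= exp y.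
Proof. intros [Hlt|Heq]; [left; now apply exp_increasing | right; now rewrite Heq]. Qed.

Lemma Rabs_scal_le t z : 0 <= t <= 1 -> Rabs (t * z) <= Rabs z.
Proof.
  intros Ht. rewrite Rabs_mult, (Rabs_right t) by lra.
  pose proof (Rabs_pos z). nra.
Qed.

Lemma Rabs_lincomb_lt a b u v e : Rabs u < e -> Rabs v < e ->
  Rabs (a * u + b * v) < (Rabs a + Rabs b + 1) * e.
Proof.
  intros Hu Hv. eapply Rle_lt_trans; [apply Rabs_triang|]. rewrite !Rabs_mult.
  pose proof (Rabs_pos a). pose proof (Rabs_pos b). pose proof (Rabs_pos u). nra.
Qed.

Lemma Rabs_le_of_sq_le s t : 0 <= t -> s ^ 2 <= t -> Rabs s <= 1 + t.
Proof. intros Ht Hs. destruct (Rle_lt_dec (Rabs s) (1 + t)); [assumption|].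
  rewrite <- Rsqr_pow2, Rsqr_abs in Hs. unfold Rsqr in Hs. nra. Qed.

Lemma deriv01_cont01 f f' : deriv01 f f' -> cont01 f.
Proof.
  intros Hf x Hx eps Heps.
  destruct (Hf x Hx 1 Rlt_0_1) as [d [Hd Hq]].
  set (L := Rabs (f' x) + 1).
  assert (HL : 0 < L) by (unfold L; pose proof (Rabs_pos (f' x)); lra).
  exists (Rmin d (eps / L)). split; [apply Rmin_pos; [lra | apply Rdiv_lt_0_compat; lra]|].
  intros z Hz Hzx.
  destruct (Req_dec z x) as [->|Hne]; [rewrite Rminus_diag, Rabs_R0; lra|].
  assert (Hzxd : Rabs (z - x) < d) by (eapply Rlt_le_trans; [apply Hzx | apply Rmin_l]).
  assert (Hzxe : Rabs (z - x) < eps / L) by (eapply Rlt_le_trans; [apply Hzx | apply Rmin_r]).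
  specialize (Hq (z - x) ltac:(lra) Hzxd). replace (x + (z - x)) with z in Hq by ring.
  specialize (Hq Hz).
  set (q := (f z - f x) / (z - x)) in Hq.
  assert (Hq' : Rabs q <= L).
  { unfold L. replace q with ((q - f' x) + f' x) by ring.
    eapply Rle_trans; [apply Rabs_triang | lra]. }
  replace (f z - f x) with (q * (z - x)) by (unfold q; field; lra).
  rewrite Rabs_mult.
  apply Rle_lt_trans with (L * Rabs (z - x)).
  - apply Rmult_le_compat_r; [apply Rabs_pos | assumption].
  - apply (Rmult_lt_compat_l L) in Hzxe; [|lra].
    replace (L * (eps / L)) with eps in Hzxe by (field; lra). lra.
Qed.

Lemma deriv01_lincomb f f' g g' a b : deriv01 f f' -> deriv01 g g' ->
  deriv01 (fun x => a * f x + b * g x) (fun x => a * f' x + b * g' x).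
Proof.
  intros Hf Hg x Hx eps Heps.
  set (c := Rabs a + Rabs b + 1).
  assert (Hc : 0 < c) by (unfold c; pose proof (Rabs_pos a); pose proof (Rabs_pos b); lra).
  destruct (Hf x Hx (eps / c)) as [d1 [Hd1 Q1]]; [apply Rdiv_lt_0_compat; lra|].
  destruct (Hg x Hx (eps / c)) as [d2 [Hd2 Q2]]; [apply Rdiv_lt_0_compat; lra|].
  exists (Rmin d1 d2). split; [apply Rmin_pos; lra|].
  intros h Hh Hlt Hin.
  specialize (Q1 h Hh (Rlt_le_trans _ _ _ Hlt (Rmin_l _ _)) Hin).
  specialize (Q2 h Hh (Rlt_le_trans _ _ _ Hlt (Rmin_r _ _)) Hin).
  replace ((a * f (x + h) + b * g (x + h) - (a * f x + b * g x)) / h - (a * f' x + b * g' x))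
    with (a * ((f (x + h) - f x) / h - f' x) + b * ((g (x + h) - g x) / h - g' x))
    by (field; assumption).
  replace eps with (c * (eps / c)) by (field; lra).
  now apply Rabs_lincomb_lt.
Qed.

Lemma cont01_lincomb f g a b : cont01 f -> cont01 g -> cont01 (fun x => a * f x + b * g x).
Proof.
  intros Hf Hg x Hx eps Heps.
  set (c := Rabs a + Rabs b + 1).
  assert (Hc : 0 < c) by (unfold c; pose proof (Rabs_pos a); pose proof (Rabs_pos b); lra).
  destruct (Hf x Hx (eps / c)) as [d1 [Hd1 Q1]]; [apply Rdiv_lt_0_compat; lra|].
  destruct (Hg x Hx (eps / c)) as [d2 [Hd2 Q2]]; [apply Rdiv_lt_0_compat; lra|].
  exists (Rmin d1 d2). split; [apply Rmin_pos; lra|].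
  intros z Hz Hlt.
  specialize (Q1 z Hz (Rlt_le_trans _ _ _ Hlt (Rmin_l _ _))).
  specialize (Q2 z Hz (Rlt_le_trans _ _ _ Hlt (Rmin_r _ _))).
  replace (a * f z + b * g z - (a * f x + b * g x)) with (a * (f z - f x) + b * (g z - g x))
    by ring.
  replace eps with (c * (eps / c)) by (field; lra).
  now apply Rabs_lincomb_lt.
Qed.

Lemma inC1_lincomb n y1 y1' y2 y2' a b : inC1 n y1 y1' -> inC1 n y2 y2' ->
  inC1 n (fun i x => a * y1 i x + b * y2 i x) (fun i x => a * y1' i x + b * y2' i x).
Proof.
  intros H1 H2 i Hi. destruct (H1 i Hi), (H2 i Hi).
  split; [apply deriv01_lincomb | apply cont01_lincomb]; assumption.
Qed.

(* Clamping to [0,1] extends functions on [0,1] to R without changing them there,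
   so that Coquelicot's calculus on R applies. *)
Definition clamp (x : R) : R := Rmax 0 (Rmin 1 x).

Lemma clamp_id x : in01 x -> clamp x = x.
Proof. unfold in01, clamp, Rmax, Rmin; intros; repeat destruct Rle_dec; lra. Qed.

Lemma clamp_in01 x : in01 (clamp x).
Proof. unfold in01, clamp, Rmax, Rmin; repeat destruct Rle_dec; lra. Qed.

Lemma clamp_lipschitz a b : Rabs (clamp a - clamp b) <= Rabs (a - b).
Proof. unfold clamp, Rmax, Rmin; repeat destruct Rle_dec; split_Rabs; lra. Qed.

Lemma continuous_clamp f x : cont01 f -> continuous (fun t => f (clamp t)) x.
Proof.
  intros Hf. apply continuity_pt_filterlim.
  intros eps Heps. destruct (Hf (clamp x) (clamp_in01 x) eps Heps) as [d [Hd Hz]].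
  exists d. split; [assumption|]. intros z [_ Hzx]. apply Hz; [apply clamp_in01|].
  eapply Rle_lt_trans; [apply clamp_lipschitz | exact Hzx].
Qed.

Lemma is_derive_clamp f f' x : deriv01 f f' -> 0 < x < 1 ->
  is_derive (fun t => f (clamp t)) x (f' x).
Proof.
  intros Hf Hx. apply is_derive_Reals. intros eps Heps.
  assert (Hx01 : in01 x) by (unfold in01; lra).
  destruct (Hf x Hx01 eps Heps) as [d [Hd Hq]].
  assert (Hm : 0 < Rmin d (Rmin x (1 - x))) by (repeat apply Rmin_pos; lra).
  exists (mkposreal _ Hm). simpl. intros h Hh Hlt.
  assert (Hhd : Rabs h < d) by (eapply Rlt_le_trans; [apply Hlt | apply Rmin_l]).
  assert (Hhx : Rabs h < Rmin x (1 - x)) by (eapply Rlt_le_trans; [apply Hlt | apply Rmin_r]).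
  assert (Hin : in01 (x + h)).
  { pose proof (Rmin_l x (1 - x)). pose proof (Rmin_r x (1 - x)).
    unfold in01. revert Hhx; split_Rabs; lra. }
  rewrite (clamp_id _ Hin), (clamp_id _ Hx01). now apply Hq.
Qed.

Lemma MVT_01 F F' a b : 0 <= a < b -> b <= 1 ->
  (forall x, in01 x -> continuous F x) ->
  (forall x, 0 < x < 1 -> is_derive F x (F' x)) ->
  exists c, a <= c <= b /\ F b - F a = F' c * (b - a).
Proof.
  intros Ha Hb HFc HFd.
  destruct (MVT_gen F a b F') as [c [Hc Hmvt]]; rewrite ?Rmin_left, ?Rmax_right in * by lra.
  - intros x Hx. apply HFd. lra.
  - intros x Hx. apply continuity_pt_filterlim, HFc. unfold in01. lra.
  - exists c. split; assumption.
Qed.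

Lemma le_of_derive_nonneg_01 F F' a b : 0 <= a <= b -> b <= 1 ->
  (forall x, in01 x -> continuous F x) ->
  (forall x, 0 < x < 1 -> is_derive F x (F' x)) ->
  (forall x, in01 x -> 0 <= F' x) -> F a <= F b.
Proof.
  intros Ha Hb HFc HFd HF'. destruct (Req_dec a b) as [->|Hne]; [lra|].
  destruct (MVT_01 F F' a b) as [c [Hc Hmvt]]; try assumption; try lra.
  assert (0 <= F' c) by (apply HF'; unfold in01; lra). nra.
Qed.

Lemma eq_of_derive_zero_01 F F' x : in01 x ->
  (forall x, in01 x -> continuous F x) ->
  (forall x, 0 < x < 1 -> is_derive F x (F' x)) ->
  (forall x, in01 x -> F' x = 0) -> F x = F 0.
Proof.
  intros Hx HFc HFd HF'. destruct (Req_dec x 0) as [->|Hne]; [reflexivity|].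
  destruct (MVT_01 F F' 0 x) as [c [Hc Hmvt]]; try assumption; try (unfold in01 in Hx; lra).
  rewrite HF' in Hmvt by (unfold in01 in *; lra). lra.
Qed.

Lemma continuous_Rplus (f g : R -> R) x :
  continuous f x -> continuous g x -> continuous (fun t => f t + g t) x.
Proof. apply (continuous_plus f g). Qed.

Lemma continuous_Rminus (f g : R -> R) x :
  continuous f x -> continuous g x -> continuous (fun t => f t - g t) x.
Proof. apply (continuous_minus f g). Qed.

Lemma continuous_Rmult (f g : R -> R) x :
  continuous f x -> continuous g x -> continuous (fun t => f t * g t) x.
Proof. apply (continuous_mult f g). Qed.

Lemma continuous_Ropp (f : R -> R) x : continuous f x -> continuous (fun t => - f t) x.
Proof. apply (continuous_opp f). Qed.

Lemma continuous_Rpow (f : R -> R) m x : continuous f x -> continuous (fun t => f t ^ m) x.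
Proof.
  intros Hf. apply (continuous_comp f (fun z => z ^ m)); [exact Hf|].
  apply (@ex_derive_continuous R_AbsRing R_NormedModule). auto_derive. trivial.
Qed.

Lemma continuous_ln_comp (f : R -> R) x :
  0 < f x -> continuous f x -> continuous (fun t => ln (f t)) x.
Proof. intros Hpos Hf. apply (continuous_comp f ln); [assumption | now apply continuous_ln]. Qed.

Lemma continuous_rsum n (f : nat -> R -> R) x :
  (forall k, (k < n)%nat -> continuous (f k) x) ->
  continuous (fun t => rsum n (fun k => f k t)) x.
Proof.
  induction n as [|n IH]; intros Hf; cbn [rsum].
  - apply continuous_const.
  - apply continuous_Rplus; [apply IH|]; auto with arith.
Qed.

Lemma is_derive_rsum n (f : nat -> R -> R) (f' : nat -> R) x :
  (forall k, (k < n)%nat -> is_derive (f k) x (f' k)) ->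
  is_derive (fun t => rsum n (fun k => f k t)) x (rsum n f').
Proof.
  induction n as [|n IH]; intros Hf; cbn [rsum].
  - apply (@is_derive_const R_AbsRing R_NormedModule 0 x).
  - apply (is_derive_plus (fun t => rsum n (fun k => f k t)) (f n)); [apply IH|]; auto with arith.
Qed.

Ltac auto_continuous :=
  repeat lazymatch goal with
  | |- continuous (fun _ => ?c) _ => apply continuous_const
  | |- continuous (fun t => t) _ => apply continuous_id
  | |- continuous (fun t => @?f t + @?g t) _ => apply (continuous_Rplus f g)
  | |- continuous (fun t => @?f t - @?g t) _ => apply (continuous_Rminus f g)
  | |- continuous (fun t => @?f t * @?g t) _ => apply (continuous_Rmult f g)
  | |- continuous (fun t => @?f t / ?c) _ => apply (continuous_Rmult f (fun _ => / c))
  | |- continuous (fun t => - @?f t) _ => apply (continuous_Ropp f)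
  | |- continuous (fun t => @?f t ^ ?m) _ => apply (continuous_Rpow f m)
  | |- continuous (fun t => exp (@?f t)) _ => apply (continuous_exp_comp f)
  | |- continuous (fun t => sin (@?f t)) _ => apply (continuous_sin_comp f)
  | |- continuous (fun t => cos (@?f t)) _ => apply (continuous_cos_comp f)
  | |- continuous (fun t => ln (@?f t)) _ => apply (continuous_ln_comp f)
  | |- continuous _ _ => solve [eauto]
  end.

(* [auto_derive] leaves [Derive g x] for the opaque functions [g];
   replace them using the [is_derive g x _] facts in the context. *)
Ltac auto_derive_from_context :=
  auto_derive;
  [ repeat split; try (eexists; eassumption)
  | repeat match goal with
      |- context [Derive ?g ?x] =>
        match goal with H : is_derive _ x _ |- _ => rewrite (is_derive_unique g x _ H) end
    end ].

Section Apriori.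

Variables (n : nat) (dd : nat -> nat) (c0 c1 : nat -> R).
Hypothesis dd_pos : forall i, (i < n)%nat -> (0 < dd i)%nat.
Hypothesis D_ge2 : 2 <= rsum n (fun i => INR (dd i)).

Let D := rsum n (fun i => INR (dd i)).
Let K := rsum n (fun k => INR (dd k) * (Rabs (c0 k) + Rabs (c1 k))).
Let beta_bound := rsum n (fun k => INR (dd k) * (Rabs (c0 k) + Rabs (c1 k) + K) ^ 2).
Let E_bound := exp (K + 1 + 2 * beta_bound) ^ 2 + 2 * beta_bound * exp K ^ 2.
Let S_sq_bound := 2 * (E_bound * exp K ^ 2 + K ^ 2).
Let mu_bound := K ^ 2 + 16.
Let uc_sq_bound := 2 * (S_sq_bound + mu_bound) + 2 * S_sq_bound.

Definition solution_bound : R := mu_bound + K + 1 + uc_sq_bound.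

Lemma dd_ge1 k : (k < n)%nat -> 1 <= INR (dd k).
Proof. intros Hk. apply (le_INR 1). specialize (dd_pos k Hk). lia. Qed.

Lemma K_nonneg : 0 <= K.
Proof.
  apply rsum_nonneg. intros k Hk. pose proof (dd_ge1 k Hk).
  pose proof (Rabs_pos (c0 k)). pose proof (Rabs_pos (c1 k)). nra.
Qed.

Lemma beta_bound_nonneg : 0 <= beta_bound.
Proof.
  apply rsum_nonneg. intros k Hk. pose proof (dd_ge1 k Hk).
  pose proof (pow2_ge_0 (Rabs (c0 k) + Rabs (c1 k) + K)). nra.
Qed.

Lemma E_bound_nonneg : 0 <= E_bound.
Proof.
  pose proof beta_bound_nonneg. pose proof (pow2_ge_0 (exp K)).
  pose proof (pow2_ge_0 (exp (K + 1 + 2 * beta_bound))). unfold E_bound. nra.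
Qed.

Lemma S_sq_bound_nonneg : 0 <= S_sq_bound.
Proof.
  pose proof E_bound_nonneg. pose proof (pow2_ge_0 (exp K)). pose proof (pow2_ge_0 K).
  unfold S_sq_bound. nra.
Qed.

Lemma uc_sq_bound_nonneg : 0 <= uc_sq_bound.
Proof.
  pose proof S_sq_bound_nonneg. pose proof (pow2_ge_0 K). unfold uc_sq_bound, mu_bound. lra.
Qed.

Lemma K_ge_term i : (i < n)%nat -> INR (dd i) * (Rabs (c0 i) + Rabs (c1 i)) <= K.
Proof.
  intros Hi. apply (rsum_term_le n (fun k => INR (dd k) * (Rabs (c0 k) + Rabs (c1 k))));
    [|exact Hi].
  intros k Hk. pose proof (dd_ge1 k Hk).
  pose proof (Rabs_pos (c0 k)). pose proof (Rabs_pos (c1 k)). nra.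
Qed.

Lemma Rabs_rsum_le_K (g : nat -> R) :
  (forall k, (k < n)%nat -> Rabs (g k) <= Rabs (c0 k) + Rabs (c1 k)) ->
  Rabs (rsum n (fun k => INR (dd k) * g k)) <= K.
Proof.
  intros Hg. eapply Rle_trans; [apply Rabs_rsum_le|]. apply rsum_le. intros k Hk.
  pose proof (dd_ge1 k Hk). rewrite Rabs_mult, (Rabs_right (INR (dd k))) by lra.
  apply Rmult_le_compat_l; [lra | auto].
Qed.

Lemma D_neq0 : D <> 0.
Proof. unfold D. lra. Qed.

Lemma inv_D_bounds : 0 < / D <= 1.
Proof.
  fold D in D_ge2. split; [apply Rinv_0_lt_compat; lra|].
  rewrite <- Rinv_1. apply Rinv_le_contravar; lra.
Qed.

Lemma D_ratio_bounds : 1 / 2 <= (D - 1) / D <= 1.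
Proof.
  fold D in D_ge2. split; apply (Rmult_le_reg_r D); try lra; field_simplify; lra.
Qed.

Section Solution.

Variables (lam p3 : R) (y y' y'' : nat -> R -> R).
Hypothesis p3_01 : 0 <= p3 <= 1.
Hypothesis y_reg : forall i, (i < n)%nat ->
  deriv01 (y i) (y' i) /\ deriv01 (y' i) (y'' i) /\ cont01 (y'' i).
Hypothesis bc_r0 : rsum n (fun i => INR (dd i) *
  (- y' i 0 * rsum n (fun k => INR (dd k) * y' k 0) + (y' i 0) ^ 2)) = (D - 1) * lam.
Hypothesis ode : forall i x, (i < n)%nat -> in01 x ->
  - y' i x * rsum n (fun k => INR (dd k) * y' k x) - y'' i x = lam.
Hypothesis bc : forall i, (i < n)%nat -> y i 0 = p3 * c0 i /\ y i 1 = p3 * c1 i.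

Let yc i t := y i (clamp t).
Let uc i t := y' i (clamp t).
Let Y t := rsum n (fun k => INR (dd k) * yc k t).
Let S t := rsum n (fun k => INR (dd k) * uc k t).
Let mu := D * lam.

Lemma yc_continuous i x : (i < n)%nat -> continuous (yc i) x.
Proof. intros Hi. apply continuous_clamp, (deriv01_cont01 _ (y' i)), y_reg, Hi. Qed.

Lemma uc_continuous i x : (i < n)%nat -> continuous (uc i) x.
Proof. intros Hi. apply continuous_clamp, (deriv01_cont01 _ (y'' i)), y_reg, Hi. Qed.

Lemma Y_continuous x : continuous Y x.
Proof.
  apply (continuous_rsum n (fun k t => INR (dd k) * yc k t)). intros k Hk.
  apply continuous_Rmult; [apply continuous_const | now apply yc_continuous].
Qed.

Lemma S_continuous x : continuous S x.
Proof.
  apply (continuous_rsum n (fun k t => INR (dd k) * uc k t)). intros k Hk.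
  apply continuous_Rmult; [apply continuous_const | now apply uc_continuous].
Qed.

Local Hint Resolve yc_continuous uc_continuous Y_continuous S_continuous : core.

Lemma yc_derive i x : (i < n)%nat -> 0 < x < 1 -> is_derive (yc i) x (uc i x).
Proof.
  intros Hi Hx. unfold uc. rewrite clamp_id by (unfold in01; lra).
  apply is_derive_clamp; [apply y_reg, Hi | exact Hx].
Qed.

Lemma uc_derive i x : (i < n)%nat -> 0 < x < 1 -> is_derive (uc i) x (- uc i x * S x - lam).
Proof.
  intros Hi Hx. assert (Hx01 : in01 x) by (unfold in01; lra).
  replace (- uc i x * S x - lam) with (y'' i x).
  - apply is_derive_clamp; [apply y_reg, Hi | exact Hx].
  - unfold S, uc. rewrite clamp_id by exact Hx01. rewrite <- (ode i x Hi Hx01). ring.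
Qed.

Lemma Y_derive x : 0 < x < 1 -> is_derive Y x (S x).
Proof.
  intros Hx. apply (is_derive_rsum n (fun k t => INR (dd k) * yc k t)). intros k Hk.
  apply is_derive_scal, yc_derive; assumption.
Qed.

Lemma S_derive x : 0 < x < 1 -> is_derive S x (- S x ^ 2 - mu).
Proof.
  intros Hx.
  replace (- S x ^ 2 - mu)
    with (rsum n (fun k => INR (dd k) * (- uc k x * S x - lam))).
  - apply (is_derive_rsum n (fun k t => INR (dd k) * uc k t)). intros k Hk.
    apply is_derive_scal, uc_derive; assumption.
  - rewrite (rsum_ext n _ (fun k => (- S x) * (INR (dd k) * uc k x) + (- lam) * INR (dd k)))
      by (intros; ring).
    rewrite rsum_lincomb. unfold mu, D. fold (S x). ring.
Qed.

Let energy t := (S t ^ 2 + mu) * exp (Y t) ^ 2.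
Let E := energy 0.

Lemma energy_const x : in01 x -> energy x = E.
Proof.
  intros Hx. apply (eq_of_derive_zero_01 energy (fun _ => 0)); try easy.
  - intros t _. unfold energy. auto_continuous.
  - intros t Ht. pose proof (S_derive t Ht). pose proof (Y_derive t Ht).
    unfold energy. auto_derive_from_context. ring.
Qed.

Let V i t := (uc i t - S t / D) * exp (Y t).

Lemma V_const i x : (i < n)%nat -> in01 x -> V i x = V i 0.
Proof.
  intros Hi Hx. apply (eq_of_derive_zero_01 (V i) (fun _ => 0)); try easy.
  - intros t _. unfold V. auto_continuous.
  - intros t Ht. pose proof (S_derive t Ht). pose proof (Y_derive t Ht).
    pose proof (uc_derive i t Hi Ht).
    unfold V. auto_derive_from_context. unfold mu. field. exact D_neq0.
Qed.

Let a i := V i 0.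
Let A := rsum n (fun i => INR (dd i) * a i ^ 2).

Lemma uc_sub_mean i x : (i < n)%nat -> in01 x -> uc i x - S x / D = a i / exp (Y x).
Proof.
  intros Hi Hx. unfold a. rewrite <- (V_const i x Hi Hx). unfold V.
  field. split; [exact D_neq0 | apply Rgt_not_eq, exp_pos].
Qed.

Lemma A_nonneg : 0 <= A.
Proof.
  apply rsum_nonneg. intros k Hk. pose proof (dd_ge1 k Hk). pose proof (pow2_ge_0 (a k)). nra.
Qed.

Lemma a_sq_le_A i : (i < n)%nat -> a i ^ 2 <= A.
Proof.
  intros Hi. apply Rle_trans with (INR (dd i) * a i ^ 2).
  - pose proof (dd_ge1 i Hi). pose proof (pow2_ge_0 (a i)). nra.
  - apply (rsum_term_le n (fun k => INR (dd k) * a k ^ 2)); [|exact Hi].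
    intros k Hk. pose proof (dd_ge1 k Hk). pose proof (pow2_ge_0 (a k)). nra.
Qed.

Lemma A_eq : A = (D - 1) / D * E.
Proof.
  assert (Huc0 : forall k, uc k 0 = y' k 0)
    by (intros k; unfold uc; now rewrite clamp_id by (unfold in01; lra)).
  set (s := S 0). set (e := exp (Y 0)).
  set (Q := rsum n (fun k => INR (dd k) * y' k 0 ^ 2)).
  assert (Hs : s = rsum n (fun k => INR (dd k) * y' k 0))
    by (unfold s, S; apply rsum_ext; intros k _; now rewrite Huc0).
  assert (HQ : Q = (D - 1) * lam + s ^ 2).
  { rewrite <- bc_r0, <- Hs.
    rewrite (rsum_ext n _ (fun k => (- s) * (INR (dd k) * y' k 0) + 1 * (INR (dd k) * y' k 0 ^ 2)))
      by (intros; ring).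
    rewrite rsum_lincomb, <- Hs. fold Q. ring. }
  assert (HA : A = e ^ 2 * (Q - 2 * (s / D) * s + (s / D) ^ 2 * D)).
  { unfold A, a, V. fold e s.
    rewrite (rsum_ext n _ (fun k => e ^ 2 * (INR (dd k) * (y' k 0 - s / D) ^ 2)))
      by (intros; rewrite Huc0; ring).
    rewrite rsum_scal, rsum_weighted_sq_dev, <- Hs. reflexivity. }
  rewrite HA, HQ. unfold E, energy, mu. fold s e. field. exact D_neq0.
Qed.

Lemma E_nonneg : 0 <= E.
Proof.
  pose proof A_nonneg. pose proof D_ratio_bounds. rewrite A_eq in *.
  destruct (Rle_lt_dec 0 E); [assumption | nra].
Qed.

Lemma energy_density_nonneg x : in01 x -> 0 <= S x ^ 2 + mu.
Proof.
  intros Hx. pose proof E_nonneg. rewrite <- (energy_const x Hx) in *. unfold energy in *.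
  assert (0 < exp (Y x) ^ 2) by (apply pow_lt, exp_pos).
  destruct (Rle_lt_dec 0 (S x ^ 2 + mu)); [assumption | nra].
Qed.

Lemma yc_boundary k : (k < n)%nat -> yc k 0 = p3 * c0 k /\ yc k 1 = p3 * c1 k.
Proof. intros Hk. unfold yc. rewrite !clamp_id by (unfold in01; lra). now apply bc. Qed.

Lemma Y_boundary : Rabs (Y 0) <= K /\ Rabs (Y 1) <= K /\ Rabs (Y 1 - Y 0) <= K.
Proof.
  assert (Hp3 : forall k z, Rabs z <= Rabs (c0 k) + Rabs (c1 k) ->
                  Rabs (p3 * z) <= Rabs (c0 k) + Rabs (c1 k))
    by (intros; eapply Rle_trans; [apply Rabs_scal_le|]; assumption).
  unfold Y. rewrite rsum_minus.
  rewrite (rsum_ext n (fun k => _ - _) (fun k => INR (dd k) * (yc k 1 - yc k 0))) by (intros; ring).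
  repeat split; apply Rabs_rsum_le_K; intros k Hk; destruct (yc_boundary k Hk) as [Hy0 Hy1];
    rewrite ?Hy0, ?Hy1; try rewrite <- Rmult_minus_distr_l; apply Hp3.
  - pose proof (Rabs_pos (c1 k)). lra.
  - pose proof (Rabs_pos (c0 k)). lra.
  - unfold Rminus. rewrite <- (Rabs_Ropp (c0 k)), Rplus_comm. apply Rabs_triang.
Qed.

Lemma mu_ge_neg_K_sq : - K ^ 2 <= mu.
Proof.
  destruct (MVT_01 Y S 0 1) as [c [Hc HYS]]; try lra; auto using Y_derive.
  assert (Hc01 : in01 c) by (unfold in01; lra).
  pose proof (energy_density_nonneg c Hc01).
  destruct Y_boundary as (_ & _ & HK).
  rewrite HYS, Rminus_0_r, Rmult_1_r in HK.
  pose proof (Rabs_pos (S c)). rewrite <- (pow2_abs (S c)) in *. nra.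
Qed.

(* Sturm comparison with [sin (PI x)]: for [mu >= PI^2] the function [F] below is
   nondecreasing, yet [F 0 > 0 > F 1]. *)
Lemma mu_lt_PI2 : mu < PI ^ 2.
Proof.
  destruct (Rlt_le_dec mu (PI ^ 2)) as [|Hmu]; [assumption | exfalso].
  set (F t := exp (Y t) * (PI * cos (PI * t) - S t * sin (PI * t))).
  assert (HF : F 0 <= F 1).
  { apply (le_of_derive_nonneg_01 F (fun t => exp (Y t) * sin (PI * t) * (mu - PI ^ 2)));
      try lra.
    - intros t _. unfold F. auto_continuous.
    - intros t Ht. pose proof (S_derive t Ht). pose proof (Y_derive t Ht).
      unfold F. auto_derive_from_context. ring.
    - intros t Ht. pose proof PI_RGT_0. pose proof (exp_pos (Y t)). unfold in01 in Ht.
      assert (0 <= sin (PI * t)) by (apply sin_ge_0; nra).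
      apply Rmult_le_pos; [apply Rmult_le_pos|]; lra. }
  unfold F in HF. rewrite Rmult_0_r, Rmult_1_r, sin_0, cos_0, sin_PI, cos_PI in HF.
  pose proof PI_RGT_0. pose proof (exp_pos (Y 0)). pose proof (exp_pos (Y 1)). nra.
Qed.

Lemma mu_abs_le : Rabs mu <= mu_bound.
Proof.
  pose proof mu_ge_neg_K_sq. pose proof mu_lt_PI2. pose proof PI_RGT_0. pose proof PI_4.
  assert (PI ^ 2 <= 16) by nra. unfold mu_bound. pose proof (pow2_ge_0 K). split_Rabs; lra.
Qed.

Lemma lam_abs_le : Rabs lam <= mu_bound.
Proof.
  pose proof mu_abs_le as Hmu. unfold mu, D in Hmu.
  rewrite Rabs_mult, Rabs_right in Hmu by lra.
  pose proof (Rabs_pos lam). nra.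
Qed.

Let sigma t := rsum n (fun i => INR (dd i) * a i * (yc i t - Y t / D)).

Lemma sigma_continuous x : continuous sigma x.
Proof.
  apply (continuous_rsum n (fun i t => INR (dd i) * a i * (yc i t - Y t / D))).
  intros k Hk. auto_continuous.
Qed.

Lemma sigma_derive x : 0 < x < 1 -> is_derive sigma x (A / exp (Y x)).
Proof.
  intros Hx. assert (Hx01 : in01 x) by (unfold in01; lra).
  replace (A / exp (Y x)) with (rsum n (fun i => INR (dd i) * a i * (uc i x - S x / D))).
  - apply (is_derive_rsum n (fun i t => INR (dd i) * a i * (yc i t - Y t / D))).
    intros k Hk. pose proof (yc_derive k x Hk Hx). pose proof (Y_derive x Hx).
    auto_derive_from_context. field. exact D_neq0.
  - rewrite (rsum_ext n _ (fun i => / exp (Y x) * (INR (dd i) * a i ^ 2))).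
    + rewrite rsum_scal. unfold A. field. apply Rgt_not_eq, exp_pos.
    + intros k Hk. rewrite uc_sub_mean by assumption. field. apply Rgt_not_eq, exp_pos.
Qed.

Lemma sigma_increment_sq : (sigma 1 - sigma 0) ^ 2 <= A * beta_bound.
Proof.
  set (beta i := p3 * (c1 i - c0 i) - (Y 1 - Y 0) / D).
  assert (Hbeta : forall i, (i < n)%nat -> beta i ^ 2 <= (Rabs (c0 i) + Rabs (c1 i) + K) ^ 2).
  { intros i Hi. rewrite <- (pow2_abs (beta i)). apply pow_incr. split; [apply Rabs_pos|].
    destruct Y_boundary as (_ & _ & HK). pose proof inv_D_bounds as HD.
    unfold beta, Rminus at 1. eapply Rle_trans; [apply Rabs_triang|]. rewrite Rabs_Ropp.
    apply Rplus_le_compat.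
    - eapply Rle_trans; [apply Rabs_scal_le; assumption|].
      pose proof (Rabs_triang (c1 i) (- c0 i)). rewrite Rabs_Ropp in *. unfold Rminus. lra.
    - unfold Rdiv. rewrite Rabs_mult, (Rabs_right (/ D)) by lra.
      pose proof (Rabs_pos (Y 1 - Y 0)). nra. }
  replace (sigma 1 - sigma 0) with (rsum n (fun i => INR (dd i) * a i * beta i)).
  - eapply Rle_trans; [apply rsum_Cauchy_Schwarz; intros k Hk; pose proof (dd_ge1 k Hk); lra|].
    apply Rmult_le_compat_l; [apply A_nonneg|].
    apply rsum_le. intros k Hk. pose proof (dd_ge1 k Hk).
    apply Rmult_le_compat_l; [lra | auto].
  - unfold sigma. rewrite rsum_minus. apply rsum_ext. intros k Hk.
    destruct (yc_boundary k Hk) as [Hy0 Hy1]. rewrite Hy0, Hy1. unfold beta. field. exact D_neq0.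
Qed.

Lemma A_ge_half_E : E / 2 <= A.
Proof. rewrite A_eq. pose proof E_nonneg. pose proof D_ratio_bounds. nra. Qed.

Lemma expY_le_affine (Hmu : 0 <= mu) x : in01 x -> exp (Y x) <= exp (Y 0) + sqrt E * x.
Proof.
  intros Hx.
  set (F t := exp (Y 0) + sqrt E * t - exp (Y t)).
  enough (F 0 <= F x) by (unfold F in *; lra).
  apply (le_of_derive_nonneg_01 F (fun t => sqrt E - S t * exp (Y t)));
    try (unfold in01 in Hx; lra).
  - intros t _. unfold F. auto_continuous.
  - intros t Ht. pose proof (Y_derive t Ht). unfold F. auto_derive_from_context. ring.
  - intros t Ht. cbv beta.
    assert (HSE : (S t * exp (Y t)) ^ 2 <= E).
    { rewrite <- (energy_const t Ht). unfold energy.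
      pose proof (pow2_ge_0 (exp (Y t))). nra. }
    apply sqrt_le_1_alt in HSE. rewrite <- Rsqr_pow2, sqrt_Rsqr_abs in HSE.
    pose proof (Rle_abs (S t * exp (Y t))). lra.
Qed.

(* [sigma' = A e^(-Y) >= A / (e^(Y 0) + sqrt E t)] by [expY_le_affine]; integrating and
   using [sigma_increment_sq] bounds the logarithm. *)
Lemma log_ratio_sq_le (Hmu : 0 <= mu) (HE : 0 < E) :
  (ln (exp (Y 0) + sqrt E) - Y 0) ^ 2 <= 2 * beta_bound.
Proof.
  set (P0 := exp (Y 0)). set (sE := sqrt E).
  assert (HP0 : 0 < P0) by apply exp_pos.
  assert (HsE : 0 < sE) by (apply sqrt_lt_R0; lra).
  set (G t := sE * sigma t - A * ln (P0 + sE * t)).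
  assert (HG : G 0 <= G 1).
  { apply (le_of_derive_nonneg_01 G (fun t => sE * (A / exp (Y t)) - A * (sE / (P0 + sE * t))));
      try lra.
    - intros t Ht. unfold in01 in Ht. unfold G. auto_continuous; [|nra]. apply sigma_continuous.
    - intros t Ht. pose proof (sigma_derive t Ht). unfold G.
      auto_derive_from_context; [nra | field; split; [nra | apply Rgt_not_eq, exp_pos]].
    - intros t Ht. cbv beta. pose proof A_nonneg.
      assert (/ (P0 + sE * t) <= / exp (Y t))
        by (apply Rinv_le_contravar; [apply exp_pos | now apply expY_le_affine]).
      replace (sE * (A / exp (Y t)) - A * (sE / (P0 + sE * t)))
        with (A * sE * (/ exp (Y t) - / (P0 + sE * t))) by (unfold Rdiv; ring).
      apply Rmult_le_pos; nra. }
  unfold G in HG. rewrite Rmult_0_r, Rplus_0_r, Rmult_1_r in HG.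
  set (T := ln (P0 + sE) - Y 0). fold T.
  assert (HT : 0 <= T).
  { unfold T. rewrite <- (ln_exp (Y 0)). fold P0.
    assert (ln P0 <= ln (P0 + sE)) by (apply ln_le; lra). lra. }
  assert (HAT : A * T <= sE * (sigma 1 - sigma 0)).
  { unfold T. rewrite <- (ln_exp (Y 0)). fold P0. lra. }
  pose proof sigma_increment_sq. pose proof A_ge_half_E. pose proof A_nonneg.
  assert (HsE2 : sE ^ 2 = E) by (apply pow2_sqrt; lra).
  assert (A ^ 2 * T ^ 2 <= E * (A * beta_bound)).
  { rewrite <- HsE2. assert (0 <= A * T) by nra.
    apply Rle_trans with ((sE * (sigma 1 - sigma 0)) ^ 2);
      [rewrite <- Rpow_mult_distr; apply pow_incr; lra|].
    rewrite Rpow_mult_distr. apply Rmult_le_compat_l; [nra | assumption]. }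
  assert (A * T ^ 2 <= E * beta_bound) by nra.
  nra.
Qed.

Lemma E_le_of_mu_nonneg (Hmu : 0 <= mu) : E <= exp (K + 1 + 2 * beta_bound) ^ 2.
Proof.
  pose proof (pow2_ge_0 (exp (K + 1 + 2 * beta_bound))).
  destruct (Req_dec E 0) as [->|HE0]; [assumption|].
  assert (HE : 0 < E) by (pose proof E_nonneg; lra).
  pose proof (log_ratio_sq_le Hmu HE) as HT. pose proof beta_bound_nonneg.
  set (P0 := exp (Y 0)) in HT. set (sE := sqrt E) in HT.
  assert (HP0 : 0 < P0) by apply exp_pos.
  assert (HsE : 0 < sE) by (apply sqrt_lt_R0; lra).
  assert (Hln : ln (P0 + sE) <= Y 0 + (1 + 2 * beta_bound)) by nra.
  apply exp_le_compat in Hln. rewrite exp_ln in Hln by lra.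
  assert (exp (Y 0 + (1 + 2 * beta_bound)) <= exp (K + 1 + 2 * beta_bound)).
  { apply exp_le_compat. destruct Y_boundary as [HY0 _]. pose proof (Rle_abs (Y 0)). lra. }
  rewrite <- (pow2_sqrt E) by lra. fold sE. apply pow_incr. lra.
Qed.

(* For [mu < 0] the function [S e^Y] increases, so [Y] cannot have an interior
   maximum above its boundary values. *)
Lemma Y_le_K_of_mu_neg (Hmu : mu < 0) x : in01 x -> Y x <= K.
Proof.
  intros Hx. destruct (Rle_lt_dec (Y x) K) as [|HYx]; [assumption | exfalso].
  destruct Y_boundary as (HY0 & HY1 & _).
  pose proof (Rle_abs (Y 0)). pose proof (Rle_abs (Y 1)).
  assert (Hx0 : x <> 0) by (intros ->; lra). assert (Hx1 : x <> 1) by (intros ->; lra).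
  unfold in01 in Hx.
  destruct (MVT_01 Y S 0 x) as [q1 [Hq1 HY01]]; try lra; auto using Y_derive.
  destruct (MVT_01 Y S x 1) as [q2 [Hq2 HY12]]; try lra; auto using Y_derive.
  assert (HQ : S q1 * exp (Y q1) <= S q2 * exp (Y q2)).
  { apply (le_of_derive_nonneg_01 (fun t => S t * exp (Y t)) (fun t => - mu * exp (Y t)));
      try lra.
    - intros t _. auto_continuous.
    - intros t Ht. pose proof (S_derive t Ht). pose proof (Y_derive t Ht).
      auto_derive_from_context. ring.
    - intros t _. pose proof (exp_pos (Y t)). nra. }
  pose proof (exp_pos (Y q1)). pose proof (exp_pos (Y q2)).
  assert (0 < S q1) by nra. assert (S q2 < 0) by nra. nra.
Qed.

Lemma E_le_of_mu_neg (Hmu : mu < 0) : E <= 2 * beta_bound * exp K ^ 2.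
Proof.
  set (iK := / exp K).
  assert (HiK : 0 < iK) by (apply Rinv_0_lt_compat, exp_pos).
  set (H t := sigma t - A * iK * t).
  assert (HH : H 0 <= H 1).
  { apply (le_of_derive_nonneg_01 H (fun t => A / exp (Y t) - A * iK)); try lra.
    - intros t _. unfold H. auto_continuous. apply sigma_continuous.
    - intros t Ht. pose proof (sigma_derive t Ht). unfold H. auto_derive_from_context. ring.
    - intros t Ht. pose proof A_nonneg.
      assert (iK <= / exp (Y t))
        by (apply Rinv_le_contravar, exp_le_compat, Y_le_K_of_mu_neg; auto using exp_pos).
      unfold Rdiv. nra. }
  unfold H in HH.
  assert (HA : A * iK <= sigma 1 - sigma 0) by lra.
  pose proof sigma_increment_sq. pose proof A_nonneg. pose proof A_ge_half_E.
  assert (A * iK ^ 2 <= beta_bound).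
  { destruct (Req_dec A 0) as [->|HA0]; [rewrite Rmult_0_l; apply beta_bound_nonneg|].
    assert ((A * iK) ^ 2 <= A * beta_bound) by (apply Rle_trans with ((sigma 1 - sigma 0) ^ 2);
      [apply pow_incr; nra | assumption]).
    nra. }
  assert (A <= beta_bound * exp K ^ 2).
  { replace A with (A * iK ^ 2 * exp K ^ 2) by (unfold iK; field; apply Rgt_not_eq, exp_pos).
    apply Rmult_le_compat_r; [apply pow2_ge_0 | assumption]. }
  lra.
Qed.

Lemma E_le : E <= E_bound.
Proof.
  pose proof beta_bound_nonneg. pose proof (pow2_ge_0 (exp K)).
  pose proof (pow2_ge_0 (exp (K + 1 + 2 * beta_bound))).
  assert (0 <= 2 * beta_bound * exp K ^ 2) by nra.
  unfold E_bound. destruct (Rle_lt_dec 0 mu) as [Hmu|Hmu].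
  - pose proof (E_le_of_mu_nonneg Hmu). lra.
  - pose proof (E_le_of_mu_neg Hmu). lra.
Qed.

Lemma S_sq_le_at x : in01 x -> Rabs (Y x) <= K -> S x ^ 2 <= E_bound * exp K ^ 2 + K ^ 2.
Proof.
  intros Hx HYx.
  assert (HSE : S x ^ 2 + mu = E * exp (- Y x) ^ 2).
  { rewrite <- (energy_const x Hx). unfold energy. rewrite exp_Ropp.
    field. apply Rgt_not_eq, exp_pos. }
  assert (exp (- Y x) ^ 2 <= exp K ^ 2).
  { apply pow_incr. split; [left; apply exp_pos | apply exp_le_compat].
    pose proof (Rle_abs (- Y x)). rewrite Rabs_Ropp in *. lra. }
  pose proof E_nonneg. pose proof E_le. pose proof mu_ge_neg_K_sq.
  pose proof (pow2_ge_0 (exp (- Y x))).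
  nra.
Qed.

Lemma S_sq_le x : in01 x -> S x ^ 2 <= S_sq_bound.
Proof.
  intros Hx. destruct Y_boundary as (HY0 & HY1 & _).
  pose proof (S_sq_le_at 0 ltac:(unfold in01; lra) HY0).
  pose proof (S_sq_le_at 1 ltac:(unfold in01; lra) HY1).
  assert (Hdecr : forall u v, 0 <= u <= v -> v <= 1 -> - S u <= - S v).
  { intros u v Huv Hv. apply (le_of_derive_nonneg_01 (fun t => - S t) (fun t => S t ^ 2 + mu));
      try assumption.
    - intros t _. auto_continuous.
    - intros t Ht. pose proof (S_derive t Ht). auto_derive_from_context. ring.
    - exact energy_density_nonneg. }
  unfold in01 in Hx.
  assert (S x <= S 0) by (enough (- S 0 <= - S x) by lra; apply Hdecr; lra).
  assert (S 1 <= S x) by (enough (- S x <= - S 1) by lra; apply Hdecr; lra).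
  assert (S x ^ 2 <= S 0 ^ 2 \/ S x ^ 2 <= S 1 ^ 2)
    by (destruct (Rle_lt_dec 0 (S x)); [left | right]; nra).
  unfold S_sq_bound. pose proof (pow2_ge_0 (S 0)). pose proof (pow2_ge_0 (S 1)). lra.
Qed.

Lemma uc_abs_le i x : (i < n)%nat -> in01 x -> Rabs (uc i x) <= 1 + uc_sq_bound.
Proof.
  intros Hi Hx. pose proof S_sq_bound_nonneg. pose proof (S_sq_le x Hx). pose proof mu_abs_le.
  apply Rabs_le_of_sq_le; [unfold uc_sq_bound, mu_bound; pose proof (pow2_ge_0 K); lra|].
  assert (Hdev : (uc i x - S x / D) ^ 2 <= S x ^ 2 + mu).
  { rewrite uc_sub_mean by assumption.
    assert (HSE : S x ^ 2 + mu = E / exp (Y x) ^ 2).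
    { rewrite <- (energy_const x Hx). unfold energy. field. apply Rgt_not_eq, exp_pos. }
    rewrite HSE. unfold Rdiv. rewrite Rpow_mult_distr, pow_inv.
    assert (0 < / exp (Y x) ^ 2) by (apply Rinv_0_lt_compat, pow_lt, exp_pos).
    pose proof (a_sq_le_A i Hi). pose proof A_eq. pose proof A_nonneg.
    pose proof D_ratio_bounds. pose proof E_nonneg.
    assert (a i ^ 2 <= E) by nra.
    apply Rmult_le_compat_r; lra. }
  assert (Hmean : (S x / D) ^ 2 <= S_sq_bound).
  { pose proof inv_D_bounds as HD. unfold Rdiv. rewrite Rpow_mult_distr.
    assert (0 <= (/ D) ^ 2 <= 1) by (simpl; nra). pose proof (pow2_ge_0 (S x)). nra. }
  assert (Hmu : mu <= mu_bound) by (pose proof (Rle_abs mu); lra).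
  replace (uc i x) with ((uc i x - S x / D) + S x / D) by ring.
  pose proof (pow2_ge_0 (uc i x - S x / D - S x / D)). unfold uc_sq_bound. nra.
Qed.

Lemma yc_abs_le i x : (i < n)%nat -> in01 x -> Rabs (yc i x) <= K + (1 + uc_sq_bound).
Proof.
  intros Hi Hx.
  assert (Hyc0 : Rabs (yc i 0) <= K).
  { rewrite (proj1 (yc_boundary i Hi)). eapply Rle_trans; [apply Rabs_scal_le, p3_01|].
    pose proof (K_ge_term i Hi). pose proof (dd_ge1 i Hi).
    pose proof (Rabs_pos (c0 i)). pose proof (Rabs_pos (c1 i)). nra. }
  pose proof uc_sq_bound_nonneg.
  destruct (Req_dec x 0) as [->|Hx0]; [lra|].
  unfold in01 in Hx.
  destruct (MVT_01 (yc i) (uc i) 0 x) as [q [Hq Hyc]]; try lra; auto using yc_derive.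
  pose proof (uc_abs_le i q Hi ltac:(unfold in01; lra)).
  replace (yc i x) with (yc i 0 + uc i q * x) by lra.
  eapply Rle_trans; [apply Rabs_triang|]. rewrite Rabs_mult, (Rabs_right x) by lra.
  pose proof (Rabs_pos (uc i q)). nra.
Qed.

Lemma solution_bounded : Rabs lam <= solution_bound /\
  forall i x, (i < n)%nat -> in01 x ->
    Rabs (y i x) <= solution_bound /\ Rabs (y' i x) <= solution_bound.
Proof.
  pose proof K_nonneg. pose proof uc_sq_bound_nonneg. pose proof (pow2_ge_0 K).
  unfold solution_bound. split.
  - pose proof lam_abs_le. lra.
  - intros i x Hi Hx. pose proof (yc_abs_le i x Hi Hx). pose proof (uc_abs_le i x Hi Hx).
    unfold yc, uc in *. rewrite clamp_id in * by exact Hx. unfold mu_bound. split; lra.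
Qed.

End Solution.

End Apriori.

Definition C1_ball (n : nat) (B lam : R) (y y' : nat -> R -> R) : Prop :=
  inC1 n y y' /\ exists del, del > 0 /\ Rabs lam <= B - del /\
    forall i x, (i < n)%nat -> in01 x -> Rabs (y i x) <= B - del /\ Rabs (y' i x) <= B - del.

Lemma C1_ball_subset n B : subset_space n (C1_ball n B).
Proof. intros lam y y' [HC1 _]. exact HC1. Qed.

Lemma C1_ball_bounded n B : bounded_space n (C1_ball n B).
Proof.
  exists B. intros lam y y' [_ [del [Hdel [Hlam Hy]]]]. split; [lra|].
  intros i x Hi Hx. destruct (Hy i x Hi Hx). lra.
Qed.

Lemma Rabs_convex_le t u v B d1 d2 : 0 <= t <= 1 -> Rabs u <= B - d1 -> Rabs v <= B - d2 ->
  Rabs (t * u + (1 - t) * v) <= B - Rmin d1 d2.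
Proof.
  intros Ht Hu Hv. eapply Rle_trans; [apply Rabs_triang|].
  rewrite !Rabs_mult, (Rabs_right t), (Rabs_right (1 - t)) by lra.
  pose proof (Rmin_l d1 d2). pose proof (Rmin_r d1 d2). nra.
Qed.

Lemma C1_ball_convex n B : convex_space (C1_ball n B).
Proof.
  intros l1 y1 y1' l2 y2 y2' t [C1 [d1 [Hd1 [Hl1 Hy1]]]] [C2 [d2 [Hd2 [Hl2 Hy2]]]] Ht.
  split; [now apply inC1_lincomb|].
  exists (Rmin d1 d2). split; [apply Rmin_pos; lra|]. split; [now apply Rabs_convex_le|].
  intros i x Hi Hx. destruct (Hy1 i x Hi Hx), (Hy2 i x Hi Hx).
  split; now apply Rabs_convex_le.
Qed.

Lemma C1_ball_open n B : open_space n (C1_ball n B).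
Proof.
  intros lam y y' [_ [del [Hdel [Hlam Hy]]]]. exists (del / 2). split; [lra|].
  intros mu z z' HC1 Hmu Hz. split; [exact HC1|].
  exists (del / 2). split; [lra|]. split.
  - pose proof (Rabs_triang_inv mu lam). lra.
  - intros i x Hi Hx. destruct (Hz i x Hi Hx), (Hy i x Hi Hx).
    pose proof (Rabs_triang_inv (z i x) (y i x)). pose proof (Rabs_triang_inv (z' i x) (y' i x)).
    split; lra.
Qed.

Theorem lemma4p3 (n : nat) (dd : nat -> nat) (c0 c1 : nat -> R) :
  (forall i, (i < n)%nat -> (0 < dd i)%nat) ->
  (2 <= rsum n (fun i => INR (dd i))) ->
  exists Om : R -> (nat -> R -> R) -> (nat -> R -> R) -> Prop,
    subset_space n Om /\ bounded_space n Om /\ convex_space Om /\ open_space n Om /\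
    forall (lam p3 : R) (y y' y'' : nat -> R -> R),
      0 <= p3 <= 1 ->
      (forall i, (i < n)%nat ->
         deriv01 (y i) (y' i) /\ deriv01 (y' i) (y'' i) /\ cont01 (y'' i)) ->
      rsum n (fun i => INR (dd i) *
          (- y' i 0 * rsum n (fun k => INR (dd k) * y' k 0) + (y' i 0) ^ 2))
        = (rsum n (fun i => INR (dd i)) - 1) * lam ->
      (forall i x, (i < n)%nat -> in01 x ->
         - y' i x * rsum n (fun k => INR (dd k) * y' k x) - y'' i x = lam) ->
      (forall i, (i < n)%nat -> y i 0 = p3 * c0 i /\ y i 1 = p3 * c1 i) ->
      Om lam y y'.
Proof.
  intros Hdd HD.
  exists (C1_ball n (solution_bound n dd c0 c1 + 1)).
  split; [apply C1_ball_subset|]. split; [apply C1_ball_bounded|].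
  split; [apply C1_ball_convex|]. split; [apply C1_ball_open|].
  intros lam p3 y y' y'' Hp3 Hreg Hr0 Hode Hbc.
  destruct (solution_bounded n dd c0 c1 Hdd HD lam p3 y y' y'' Hp3 Hreg Hr0 Hode Hbc)
    as [Hlam Hy].
  split.
  - intros i Hi. destruct (Hreg i Hi) as (Hy' & Hy'' & _).
    split; [exact Hy' | exact (deriv01_cont01 _ _ Hy'')].
  - exists 1. split; [lra|]. split; [lra|].
    intros i x Hi Hx. destruct (Hy i x Hi Hx). split; lra.
Qed.
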